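(* Let $n\ge 1$, $L>0$, and let $f:[0,1]^n\to\mathbb{R}$ satisfy $|f(x)-f(y)|\le L\|x-y\|$ for all $x,y\in[0,1]^n$. Run the algorithm described in the context on $f$, producing queried centers $x_t$, edge vectors $v_t$ and values $f_t=f(P(x_t))$. Then for every $t\ge 2$, $$f_t-\min_{x\in[0,1]^n}f(x)\le (1+\theta)L\|v_t\|,$$ where $\theta=2^{1/n}$.
   Context: Notation: $\|\cdot\|$ is the Euclidean norm; $\Omega=[0,1]^n$; $\theta=2^{1/n}$; $P:\mathbb{R}^n\to\Omega$ is the Euclidean projection onto $\Omega$ (coordinatewise clipping to $[0,1]$); $e_i$ is the $i$-th standard basis vector and $v(i)$ the $i$-th coordinate of $v$. For a center $x\in\mathbb{R}^n$ and edge vector $v\in(0,\infty)^n$, $H(x,v)=\prod_{i=1}^n[x(i)-v(i),\,x(i)+v(i)]$. The algorithm maintains a list of candidates, each a triple (center $x$, edge vector $v$, score $s$). Splitting rule: given an evaluated point $x_a$ with edge vector $v_a$ and value $f_a$, let $I$ be an index maximizing $v_a(i)$ over $i\in\{1,\dots,n\}$ (ties broken by smallest index), let $z=\tfrac{v_a(I)}{2}e_I$, and add to the list the two candidates $(x_a+z,\ v_a-z,\ f_a-L\|v_a\|)$ and $(x_a-z,\ v_a-z,\ f_a-L\|v_a\|)$. Initialization: $x_1=v_1=(\theta^{-1},\theta^{-2},\dots,\theta^{-n})$, $f_1=f(P(x_1))$, and apply the splitting rule to $(x_1,v_1,f_1)$. For each $t\ge 2$: remove from the list a candidate with the smallest score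 (ties arbitrary), call its center $x_t$ and edge vector $v_t$, evaluate $f_t=f(P(x_t))$, and apply the splitting rule to $(x_t,v_t,f_t)$. *)

From mathcomp Require Import all_boot all_order all_algebra.
From mathcomp Require Import all_classical all_reals all_analysis.
Set Implicit Arguments. Unset Strict Implicit. Unset Printing Implicit Defensive.
Import Order.TTheory GRing.Theory Num.Theory.
Local Open Scope ring_scope.

Section Defs.
Variables (R : realType) (n : nat).

Definition vec := 'I_n -> R.

Definition enorm (v : vec) : R := Num.sqrt (\sum_(i < n) v i ^+ 2).

Definition vadd (x y : vec) : vec := fun i => x i + y i.
Definition vsub (x y : vec) : vec := fun i => x i - y i.

Definition inOmega (x : vec) : Prop := forall i, 0 <= x i <= 1.

(* Euclidean projection onto Omega: coordinatewise clipping *)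
Definition proj (x : vec) : vec := fun i => Num.min 1 (Num.max 0 (x i)).

Definition theta : R := powR 2 (n%:R^-1).

Definition init_vec : vec := fun i => theta ^- (i.+1).

Definition split_index (v : vec) (I : 'I_n) : Prop :=
  (forall j : 'I_n, v j <= v I) /\ (forall j : 'I_n, (j < I)%N -> v j < v I).

(* candidates: (center, edge vector, score) *)
Definition cand := (vec * vec * R)%type.

Definition zvec (v : vec) (I : 'I_n) : vec :=
  fun i => if i == I then v I / 2 else 0.

Definition split_cands (L : R) (I : 'I_n) (xa va : vec) (fa : R) : seq cand :=
  [:: (vadd xa (zvec va I), vsub va (zvec va I), fa - L * enorm va);
      (vsub xa (zvec va I), vsub va (zvec va I), fa - L * enorm va)].

(* (x, v, fv, C) is a run of the algorithm on f with constant L; C t is the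
   candidate list after step t (indices t >= 1). Ties in the minimal score are
   arbitrary, so any valid choice is allowed. *)
Definition is_run (L : R) (f : vec -> R) (x v : nat -> vec) (fv : nat -> R)
    (C : nat -> seq cand) : Prop :=
  [/\ x 1%N = init_vec, v 1%N = init_vec,
      (forall t, (1 <= t)%N -> fv t = f (proj (x t))),
      (exists I, split_index (v 1%N) I /\
                 C 1%N = split_cands L I (x 1%N) (v 1%N) (fv 1%N)) &
      (forall t, (2 <= t)%N ->
         exists (l1 l2 : seq cand) (s : R) (I : 'I_n),
           [/\ C t.-1 = l1 ++ (x t, v t, s) :: l2,
               all (fun c : cand => s <= c.2) (C t.-1),
               split_index (v t) I &
               C t = l1 ++ l2 ++ split_cands L I (x t) (v t) (fv t)])].

End Defs.

From Pilot Require Import Defs.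
From mathcomp Require Import all_boot all_order all_algebra.
From mathcomp Require Import all_classical all_reals all_analysis.
From mathcomp Require Import zify ring lra.
From Stdlib Require List.
Set Implicit Arguments. Unset Strict Implicit. Unset Printing Implicit Defensive.
Import Order.TTheory GRing.Theory Num.Theory.
Local Open Scope ring_scope.

(* Every candidate (x, w, s) on the list satisfies an invariant: s <= f on
   Omega ∩ H(x, w), f (P x) - s <= (1 + theta) L |w|, and w is a permutation of
   (c, c theta^-1, ..., c theta^-(n-1)); moreover the boxes on the list cover
   Omega.  Halving the largest edge c gives c / 2 = (c / theta) theta^-(n-1), so
   the children have the same shape with c / theta and |w| = theta |w'|.  The
   Lipschitz bound over the parent box then yields the invariant for the
   children, the score drop L |w| = L theta |w'| supplying the factor theta.
   At step t some candidate's box contains y; its score is at most f y and at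
   least the minimal score s_t, whence f_t - f y <= f_t - s_t. *)

Lemma clip_lipschitz (R : realDomainType) (a b : R) :
  `|Num.min 1 (Num.max 0 a) - Num.min 1 (Num.max 0 b)| <= `|a - b|.
Proof.
have /andP[lo hi] : - `|a - b| <= a - b <= `|a - b| by rewrite -ler_norml.
rewrite ler_norml /Num.max /Num.min.
case: (ltrP 0 a) => ?; case: (ltrP 0 b) => ? /=;
  by do 2![case: ltrP => ? /=]; apply/andP; split; lra.
Qed.

Section Projection.
Variables (R : realType) (n : nat).
Implicit Types (a b y w : vec R n).

Lemma proj_lipschitz a b (i : 'I_n) :
  `|Defs.proj a i - Defs.proj b i| <= `|a i - b i|.
Proof. exact: clip_lipschitz. Qed.

Lemma proj_inOmega a : inOmega (Defs.proj a).
Proof.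
move=> i; rewrite /Defs.proj /Num.max /Num.min.
by case: (ltrP 0 (a i)) => ?; case: ltrP => ? /=; lra.
Qed.

Lemma proj_id y : inOmega y -> Defs.proj y = y.
Proof.
move=> yO; apply/funext => i; have /andP[y0 y1] := yO i.
rewrite /Defs.proj /Num.max /Num.min.
by case: (ltrP 0 (y i)) => ?; case: ltrP => ? /=; lra.
Qed.

Lemma enorm_le a w : (forall i, `|a i| <= w i) -> enorm a <= enorm w.
Proof.
move=> aw; apply: ler_wsqrtr; apply: ler_sum => i _.
by rewrite -real_normK ?num_real // ler_sqr ?nnegrE ?(le_trans _ (aw i)).
Qed.

End Projection.

Section Theta.
Variables (R : realType) (n : nat).
Hypothesis n_gt0 : (0 < n)%N.
Local Notation theta := (theta R n).

Lemma theta_expn : theta ^+ n = 2.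
Proof.
rewrite /theta -powR_mulrn ?powR_ge0 // -powRrM mulVf ?powRr1 //.
by rewrite pnatr_eq0 -lt0n.
Qed.

Lemma theta_gt1 : 1 < theta.
Proof.
rewrite ltNge; apply/negP => theta_le1.
by have := exprn_ile1 n (powR_ge0 _ _) theta_le1; rewrite theta_expn; lra.
Qed.

Lemma theta_expS_ord_pred (k : 'I_n) :
  theta ^+ (ord_pred k).+1 = if k == 0 :> nat then 2 else theta ^+ k.
Proof.
case: k => [[|k] lt_k_n] /=.
  by rewrite add0n modn_small ?prednK ?theta_expn //; lia.
by rewrite modnDr modn_small //; lia.
Qed.

Definition geometric (w : vec R n) := exists c (g : 'I_n -> 'I_n),
  [/\ 0 < c, injective g & forall i, w i = c / theta ^+ g i].

Lemma geometric_gt0 w : geometric w -> forall i, 0 < w i.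
Proof.
move=> [c [g [c_gt0 _ w_def]]] i.
by rewrite w_def divr_gt0 // exprn_gt0 //; have := theta_gt1; lra.
Qed.

Lemma enorm_geometric w c (g : 'I_n -> 'I_n) : 0 <= c -> injective g ->
  (forall i, w i = c / theta ^+ g i) ->
  enorm w = c * enorm (fun i : 'I_n => theta ^- i).
Proof.
move=> c_ge0 g_inj w_def; rewrite /enorm.
under eq_bigr => i _ do rewrite w_def exprMn.
rewrite -mulr_sumr sqrtrM ?sqr_ge0 // sqrtr_sqr ger0_norm //.
by congr (_ * Num.sqrt _); rewrite [RHS](reindex_inj g_inj).
Qed.

Lemma argmax_geometric_exponent w c (g : 'I_n -> 'I_n) (I : 'I_n) :
  0 < c -> injective g -> (forall i, w i = c / theta ^+ g i) ->
  (forall j, w j <= w I) -> g I = 0 :> nat.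
Proof.
move=> c_gt0 g_inj w_def w_max; apply/eqP.
apply: contraLR (w_max (invF g_inj (Ordinal n_gt0))).
rewrite -lt0n -ltNge !w_def f_invF /= expr0 divr1 => gI_gt0.
rewrite gtr_pMr // invf_lt1 ?exprn_gt0 ?exprn_egt1 -?lt0n //; have := theta_gt1; lra.
Qed.

Lemma split_geometric w I : geometric w -> split_index w I ->
  geometric (vsub w (zvec w I)) /\ enorm w = theta * enorm (vsub w (zvec w I)).
Proof.
move=> [c [g [c_gt0 g_inj w_def]]] [w_max _].
have theta_gt0 : 0 < theta by have := theta_gt1; lra.
have gI0 := argmax_geometric_exponent c_gt0 g_inj w_def w_max.
have w'_def i : vsub w (zvec w I) i = c / theta / theta ^+ ord_pred (g i).
  rewrite -mulrA -invfM -exprS theta_expS_ord_pred /vsub /zvec.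
  case: (i =P I) => [->|/eqP i_neq_I]; first by rewrite gI0 /= w_def gI0 expr0; field.
  suff /negPf-> : g i != 0 :> nat by rewrite subr0 w_def.
  by apply: contra i_neq_I => /eqP gi0; apply/eqP/g_inj/val_inj; rewrite /= gi0 gI0.
have g'_inj : injective (@ord_pred n \o g) := inj_comp (@ord_pred_inj n) g_inj.
have c'_gt0 : 0 < c / theta by exact: divr_gt0.
split; first by exists (c / theta), (@ord_pred n \o g).
rewrite (enorm_geometric (ltW c_gt0) g_inj w_def).
rewrite (enorm_geometric (ltW c'_gt0) g'_inj w'_def).
by field; lra.
Qed.

End Theta.

Section Boxes.
Variables (R : realType) (n : nat).
Implicit Types (x y w z : vec R n).

Definition inBox y x w := forall i, `|y i - x i| <= w i.

Definition covers (l : seq (cand R n)) :=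
  forall y, inOmega y -> exists2 c, List.In c l & inBox y c.1.1 c.1.2.

Lemma inBox_trans y x1 x2 w1 w2 :
  inBox y x1 w1 -> inBox x1 x2 w2 -> inBox y x2 (vadd w1 w2).
Proof.
by move=> y_in x1_in i; exact: le_trans (ler_distD (x1 i) _ _) (lerD (y_in i) (x1_in i)).
Qed.

Lemma inBox_vadd x z : (forall i, 0 <= z i) -> inBox (vadd x z) x z.
Proof. by move=> z_ge0 i; rewrite /vadd addrC addKr ger0_norm. Qed.

Lemma inBox_vsub x z : (forall i, 0 <= z i) -> inBox (vsub x z) x z.
Proof. by move=> z_ge0 i; rewrite /vsub addrC addKr normrN ger0_norm. Qed.

Lemma zvec_ge0 w I : 0 <= w I -> forall i, 0 <= zvec w I i.
Proof. by move=> wI_ge0 i; rewrite /zvec; case: eqP => // _; lra. Qed.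

Lemma inBox_split y x w I : inBox y x w ->
  inBox y (vadd x (zvec w I)) (vsub w (zvec w I)) \/
  inBox y (vsub x (zvec w I)) (vsub w (zvec w I)).
Proof.
move=> y_in; have := y_in I; rewrite ler_norml => /andP[lo hi].
have [xI_le_yI|yI_lt_xI] := lerP (x I) (y I); [left|right] => i;
  rewrite /vadd /vsub /zvec; case: eqP => [->|_]; rewrite ?addr0 ?subr0 ?y_in //;
  rewrite ler_norml; apply/andP; split; lra.
Qed.

Lemma inBox_init y : (0 < n)%N -> inOmega y -> inBox y (@init_vec R n) (@init_vec R n).
Proof.
move=> n_gt0 yO i; have /andP[y_ge0 y_le1] := yO i.
have theta_gt1 := theta_gt1 R n_gt0.
have pow_le2 : theta R n ^+ i.+1 <= 2.
  by rewrite -(theta_expn R n_gt0) ler_weXn2l //; lra.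
have pow_gt0 : 0 < theta R n ^+ i.+1 by rewrite exprn_gt0 //; lra.
have inv_mul : (theta R n ^+ i.+1)^-1 * theta R n ^+ i.+1 = 1.
  by rewrite mulVf ?gt_eqF.
have inv_gt0 : 0 < (theta R n ^+ i.+1)^-1 by rewrite invr_gt0.
by rewrite /init_vec ler_norml; apply/andP; split; nra.
Qed.

Lemma geometric_init_vec : (0 < n)%N -> geometric (@init_vec R n).
Proof.
move=> n_gt0; have := theta_gt1 R n_gt0 => theta_gt1.
exists (theta R n)^-1, id; split => // [|i]; first by rewrite invr_gt0; lra.
by rewrite /init_vec exprS invfM.
Qed.

End Boxes.

Lemma In_replace_new (T : Type) (a c : T) l1 l2 l3 :
  List.In c (l1 ++ l2 ++ l3) -> List.In c (l1 ++ a :: l2) \/ List.In c l3.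
Proof. by rewrite !List.in_app_iff /=; tauto. Qed.

Lemma In_replace_old (T : Type) (a c : T) l1 l2 l3 :
  List.In c (l1 ++ a :: l2) -> c = a \/ List.In c (l1 ++ l2 ++ l3).
Proof. by rewrite !List.in_app_iff /=; intuition. Qed.

Section Run.
Variables (R : realType) (n : nat) (L : R) (f : vec R n -> R).
Hypothesis n_gt0 : (0 < n)%N.
Hypothesis L_ge0 : 0 <= L.
Hypothesis f_lip : forall y z : vec R n, inOmega y -> inOmega z ->
  `|f y - f z| <= L * enorm (vsub y z).
Implicit Types (x y w : vec R n).

Lemma lipschitz_proj x y w : inBox x y w ->
  `|f (Defs.proj x) - f (Defs.proj y)| <= L * enorm w.
Proof.
move=> x_in; apply: le_trans (f_lip (proj_inOmega x) (proj_inOmega y)) _.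
apply: ler_wpM2l => //; apply: enorm_le => i.
exact: le_trans (proj_lipschitz x y i) (x_in i).
Qed.

Definition valid_cand (c : cand R n) :=
  [/\ forall y, inOmega y -> inBox y c.1.1 c.1.2 -> c.2 <= f y,
      f (Defs.proj c.1.1) - c.2 <= (1 + theta R n) * L * enorm c.1.2
    & geometric c.1.2].

Lemma valid_child xa va I xc : geometric va -> split_index va I ->
  inBox xc xa (zvec va I) ->
  valid_cand (xc, vsub va (zvec va I), f (Defs.proj xa) - L * enorm va).
Proof.
move=> va_geo I_split xc_in.
have [w_geo va_norm] := split_geometric n_gt0 va_geo I_split.
have va_gt0 := geometric_gt0 n_gt0 va_geo.
have z_le_w i : zvec va I i <= vsub va (zvec va I) i.
  by rewrite /vsub /zvec; case: eqP => [->|_]; have := va_gt0 I; have := va_gt0 i; lra.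
split => //= [y yO y_in|].
  have xa_in : inBox xa y va.
    by move=> i; rewrite distrC; have := inBox_trans y_in xc_in i; rewrite /vadd subrK.
  by have := lipschitz_proj xa_in; rewrite (proj_id yO) ler_norml => /andP[_]; lra.
have xc_in' : inBox xc xa (vsub va (zvec va I)).
  by move=> i; exact: le_trans (xc_in i) (z_le_w i).
have := lipschitz_proj xc_in'; rewrite ler_norml va_norm => /andP[_ gap].
have -> : (1 + theta R n) * L * enorm (vsub va (zvec va I)) =
  L * enorm (vsub va (zvec va I)) + L * (theta R n * enorm (vsub va (zvec va I))) by ring.
lra.
Qed.

Lemma split_cands_valid xa va I : geometric va -> split_index va I ->
  forall c, List.In c (split_cands L I xa va (f (Defs.proj xa))) -> valid_cand c.
Proof.
move=> va_geo I_split c; have := zvec_ge0 (ltW (geometric_gt0 n_gt0 va_geo I)).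
by move=> z_ge0 /= [<-|[<-|[]]]; apply: valid_child => //;
  [exact: inBox_vadd | exact: inBox_vsub].
Qed.

Lemma split_cands_cover xa va fa I y : inBox y xa va ->
  exists2 c, List.In c (split_cands L I xa va fa) & inBox y c.1.1 c.1.2.
Proof.
case/(inBox_split I) => y_in; [eexists; first by left | eexists; first by right; left].
all: exact: y_in.
Qed.

Lemma run_invariant (x v : nat -> vec R n) (fv : nat -> R)
    (C : nat -> seq (cand R n)) : is_run L f x v fv C ->
  forall t, (1 <= t)%N -> (forall c, List.In c (C t) -> valid_cand c) /\ covers (C t).
Proof.
case=> x1 v1 fv_def [I1 [I1_split C1]] step.
elim=> [//|[|t] IH] _.
  have v1_geo : geometric (v 1%N) by rewrite v1; exact: geometric_init_vec.
  rewrite C1 fv_def //; split; first exact: split_cands_valid.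
  by move=> y yO; apply: split_cands_cover; rewrite x1 v1; exact: inBox_init.
have [valid cover] := IH isT.
have [l1 [l2 [s [I [Ct s_min I_split Ct']]]]] := step t.+2 isT.
have [_ _ v_geo] : valid_cand (x t.+2, v t.+2, s).
  by apply: valid; rewrite Ct; exact: List.in_elt.
rewrite Ct' fv_def //; split.
  move=> c /(In_replace_new (x t.+2, v t.+2, s)) [c_old|c_new].
    by apply: valid; rewrite Ct.
  exact: split_cands_valid c_new.
move=> y yO; have [c] := cover y yO; rewrite Ct.
move=> /(In_replace_old (split_cands L I (x t.+2) (v t.+2) (f (Defs.proj (x t.+2))))).
case=> [-> y_in|c_in y_in]; last by exists c.
have [c' c'_new y_in'] := split_cands_cover (f (Defs.proj (x t.+2))) I y_in.
by exists c' => //; rewrite !List.in_app_iff; tauto.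
Qed.

End Run.

Theorem lemma2 (R : realType) (n : nat) (L : R) (f : vec R n -> R)
    (x v : nat -> vec R n) (fv : nat -> R) (C : nat -> seq (cand R n)) :
  (0 < n)%N -> 0 < L ->
  (forall y z : vec R n, inOmega y -> inOmega z ->
     `|f y - f z| <= L * enorm (vsub y z)) ->
  is_run L f x v fv C ->
  forall t : nat, (2 <= t)%N ->
  forall y : vec R n, inOmega y ->
    fv t - f y <= (1 + theta R n) * L * enorm (v t).
Proof.
move=> n_gt0 L_gt0 f_lip run t t_ge2 y yO.
have t1_ge1 : (1 <= t.-1)%N by rewrite ltn_predRL.
have [valid cover] := run_invariant n_gt0 (ltW L_gt0) f_lip run t1_ge1.
have [_ _ fv_def _ step] := run.
have [l1 [l2 [s [I [Ct s_min _ _]]]]] := step t t_ge2.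
have [_ gap _] : valid_cand L f (x t, v t, s).
  by apply: valid; rewrite Ct; exact: List.in_elt.
have [c c_in y_in] := cover y yO.
have [lower _ _] := valid c c_in.
have s_le : s <= c.2 := proj1 (List.forallb_forall _ _) s_min c c_in.
by rewrite fv_def ?(ltnW t_ge2) //=; have := lower y yO y_in; rewrite /= in gap; lra.
Qed.
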